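(* For all positive integers $n$ and $k$ with $n\ge k$, $\log\log(d_n+1) \le n+\log\log(d_k+1)-k$.
   Context: All logarithms $\log$ are to base $2$. A delta-matroid $(E,\mathcal F)$ consists of a finite ground set $E$ and a non-empty collection $\mathcal F$ of subsets of $E$ (the feasible sets) satisfying the symmetric exchange axiom: for all $X,Y\in\mathcal F$ and every $e\in X\triangle Y$ there exists $f\in X\triangle Y$ (possibly $f=e$) with $X\triangle\{e,f\}\in\mathcal F$. Let $d_n$ denote the number of labelled delta-matroids with ground set $[n]=\{1,\dots,n\}$, i.e. the number of collections $\mathcal F$ of subsets of $[n]$ such that $([n],\mathcal F)$ is a delta-matroid. *)

From mathcomp Require Import all_boot.
From Stdlib Require Import Reals.

Set Implicit Arguments.
Unset Strict Implicit.
Unset Printing Implicit Defensive.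

Definition symdiff (T : finType) (X Y : {set T}) : {set T} := (X :\: Y) :|: (Y :\: X).

(* (E, F) is a delta-matroid, with E = the full finite type T:
   F non-empty and the symmetric exchange axiom holds. *)
Definition is_delta_matroid (T : finType) (F : {set {set T}}) : bool :=
  (F != set0) &&
  [forall X in F, forall Y in F, forall e in symdiff X Y,
     exists f in symdiff X Y, symdiff X [set e; f] \in F].

Definition num_delta_matroids (n : nat) : nat :=
  #|[set F : {set {set 'I_n}} | is_delta_matroid F]|.

Definition log2 (x : R) : R := ln x / ln 2.

From mathcomp Require Import all_boot.
From Stdlib Require Import Reals Lra.

Set Implicit Arguments.
Unset Strict Implicit.
Unset Printing Implicit Defensive.

(* Splitting a delta-matroid on [n+1] at its last element e into the family
   of feasible sets avoiding e and the family of those containing e (both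
   read as families on [n]) is injective, and each part is either empty or
   again a delta-matroid; the pair of parts is never (empty, empty).  Hence
   d_(n+1) + 1 <= (d_n + 1)^2, so log log (d_n + 1) grows by at most 1 per
   step, since squaring doubles log x and so adds 1 to log log x. *)

Lemma in_symdiff (T : finType) (X Y : {set T}) x :
  (x \in symdiff X Y) = (x \in X) (+) (x \in Y).
Proof. by rewrite /symdiff !inE; case: (x \in X); case: (x \in Y). Qed.

Definition delta_matroids m := [set F : {set {set 'I_m}} | is_delta_matroid F].

Lemma set0_notin_delta_matroids m : set0 \notin delta_matroids m.
Proof. by rewrite inE /is_delta_matroid eqxx. Qed.

Section SliceAtLastElement.
Variable n : nat.

Definition restrict_last (Z : {set 'I_n.+1}) : {set 'I_n} :=
  [set i | lift ord_max i \in Z].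

(* [slice false F] is the deletion and [slice true F] the contraction of F
   at the last element, with no non-emptiness requirement. *)
Definition slice (b : bool) (F : {set {set 'I_n.+1}}) : {set {set 'I_n}} :=
  [set restrict_last Z | Z in F & (ord_max \in Z) == b].

Lemma restrict_last_inj Z W :
  restrict_last Z = restrict_last W -> (ord_max \in Z) = (ord_max \in W) ->
  Z = W.
Proof.
move=> /setP eqZW eq_max; apply/setP=> i.
case: (unliftP ord_max i) => [j ->| ->] //.
by have := eqZW j; rewrite !inE.
Qed.

Lemma mem_slice (F : {set {set 'I_n.+1}}) Z :
  (Z \in F) = (restrict_last Z \in slice (ord_max \in Z) F).
Proof.
apply/idP/imsetP => [FZ | [W]]; first by exists Z; rewrite // inE FZ eqxx.
rewrite inE => /andP[FW /eqP maxW] eqZW.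
by rewrite (@restrict_last_inj Z W) // maxW.
Qed.

Lemma slices_inj : injective (fun F => (slice false F, slice true F)).
Proof.
move=> F G [eq0 eq1]; apply/setP=> Z.
by rewrite (mem_slice F) (mem_slice G); case: (ord_max \in Z); rewrite ?eq0 ?eq1.
Qed.

Lemma slices_neq0 (F : {set {set 'I_n.+1}}) :
  is_delta_matroid F -> (slice false F, slice true F) != (set0, set0).
Proof.
move=> /andP[/set0Pn[Z]]; rewrite mem_slice => FZ _.
by apply/eqP=> -[eq0 eq1]; move: FZ; case: (ord_max \in Z); rewrite ?eq0 ?eq1 inE.
Qed.

Lemma slice_delta_matroid b (F : {set {set 'I_n.+1}}) :
  is_delta_matroid F -> slice b F != set0 -> is_delta_matroid (slice b F).
Proof.
move=> /andP[_ /forallP exchF] sliceF_neq0; apply/andP; split => //.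
apply/forallP=> X; apply/implyP=> /imsetP[Z]; rewrite inE => /andP[FZ /eqP maxZ] ->.
apply/forallP=> Y; apply/implyP=> /imsetP[W]; rewrite inE => /andP[FW /eqP maxW] ->.
apply/forallP=> e; apply/implyP=> e_diff.
have e_diff' : lift ord_max e \in symdiff Z W.
  by rewrite in_symdiff; rewrite in_symdiff !inE in e_diff.
move: (exchF Z); rewrite FZ => /forallP/(_ W); rewrite FW => /forallP/(_ (lift ord_max e)).
rewrite e_diff' => /existsP[f /andP[f_diff FZef]].
(* the partner f cannot be the last element, on which Z and W agree *)
case: (unliftP ord_max f) f_diff FZef => [f' -> f_diff FZef | ->]; last first.
  by rewrite in_symdiff maxZ maxW addbb.
apply/existsP; exists f'; apply/andP; split.
  by rewrite in_symdiff !inE -in_symdiff.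
apply/imsetP; exists (symdiff Z [set lift ord_max e; lift ord_max f']).
  by rewrite inE FZef in_symdiff maxZ !inE !(negbTE (neq_lift _ _)) addbF eqxx.
by apply/setP=> i; rewrite !inE !(inj_eq (@lift_inj _ _)).
Qed.

Lemma num_delta_matroidsS_le :
  (num_delta_matroids n.+1).+1 <= (num_delta_matroids n).+1 * (num_delta_matroids n).+1.
Proof.
set A := set0 |: delta_matroids n.
have cardA : #|A| = (num_delta_matroids n).+1.
  by rewrite cardsU1 set0_notin_delta_matroids.
have slices_sub : [set (slice false F, slice true F) | F in delta_matroids n.+1]
                    \subset setX A A :\ (set0, set0).
  apply/subsetP=> p /imsetP[F]; rewrite inE => dmF ->.
  rewrite !inE slices_neq0 //=.
  by apply/andP; split; case: eqP => //= /eqP; apply: slice_delta_matroid.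
move: (subset_leq_card slices_sub); rewrite card_imset; last exact: slices_inj.
have := cardsD1 (set0, set0) (setX A A).
by rewrite cardsX cardA !inE eqxx add1n => -> .
Qed.

End SliceAtLastElement.

Lemma num_delta_matroids_gt0 m : 0 < num_delta_matroids m.
Proof.
rewrite card_gt0; apply/set0Pn; exists [set set0]; rewrite inE; apply/andP; split.
  by apply/set0Pn; exists set0; rewrite set11.
apply/forallP=> X; apply/implyP; rewrite inE => /eqP ->.
apply/forallP=> Y; apply/implyP; rewrite inE => /eqP ->.
by apply/forallP=> e; rewrite /symdiff setDv setU0 inE.
Qed.

Section Log2.
Local Open Scope R_scope.

Lemma ln2_gt0 : 0 < ln 2.
Proof. have := ln_lt_2; lra. Qed.

Lemma log2_le x y : 0 < x -> x <= y -> log2 x <= log2 y.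
Proof.
move=> x_gt0 [lt_xy | <-]; last lra.
apply: Rmult_le_compat_r; first by left; apply: Rinv_0_lt_compat; exact: ln2_gt0.
by left; apply: ln_increasing.
Qed.

Lemma log2_gt0 x : 1 < x -> 0 < log2 x.
Proof.
move=> x_gt1; apply: Rdiv_lt_0_compat; last exact: ln2_gt0.
by rewrite -ln_1; apply: ln_increasing; lra.
Qed.

Lemma log2M x y : 0 < x -> 0 < y -> log2 (x * y) = log2 x + log2 y.
Proof. by move=> x_gt0 y_gt0; rewrite /log2 ln_mult //; field; have := ln2_gt0; lra. Qed.

Lemma log2_2 : log2 2 = 1.
Proof. by rewrite /log2; field; have := ln2_gt0; lra. Qed.

Lemma loglog2_le_sq x y :
  1 < x -> 1 < y -> y <= x * x -> log2 (log2 y) <= 1 + log2 (log2 x).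
Proof.
move=> x_gt1 y_gt1 le_y_xx.
have logx_gt0 := log2_gt0 x_gt1.
have log_y_le : log2 y <= 2 * log2 x.
  by have := @log2_le y (x * x); rewrite log2M; lra.
rewrite -log2_2 -log2M; [ | lra | exact: logx_gt0].
by apply: log2_le => //; exact: log2_gt0.
Qed.

Lemma loglog2_iter (u : nat -> R) :
  (forall m, 1 < u m) -> (forall m, u m.+1 <= u m * u m) ->
  forall k j : nat, log2 (log2 (u (k + j)%nat)) <= INR j + log2 (log2 (u k)).
Proof.
move=> u_gt1 u_sq k; elim=> [|j IHj]; first by rewrite addn0 /=; lra.
rewrite addnS S_INR; have := loglog2_le_sq (u_gt1 _) (u_gt1 _) (u_sq (k + j)%nat); lra.
Qed.

End Log2.

Theorem corollary3p6 (n k : nat) :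
  (0 < k)%N -> (k <= n)%N ->
  (log2 (log2 (INR (num_delta_matroids n) + 1))
   <= INR n + log2 (log2 (INR (num_delta_matroids k) + 1)) - INR k)%R.
Proof.
move=> _ le_kn.
pose u m := (INR (num_delta_matroids m) + 1)%R.
have u_gt1 m : (1 < u m)%R.
  rewrite /u -S_INR -[1%R]/(INR 1); apply: lt_INR; apply/ltP.
  by rewrite ltnS num_delta_matroids_gt0.
have u_sq m : (u m.+1 <= u m * u m)%R.
  by rewrite /u -!S_INR -mult_INR; apply: le_INR; apply/leP; exact: num_delta_matroidsS_le.
have := loglog2_iter u_gt1 u_sq k (n - k); rewrite subnKC // minus_INR; last exact/leP.
rewrite /u; lra.
Qed.
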